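(* Let $G$ be a finitely generated group of exponential growth with finite generating set $S_G$ and let $H\ne\{1\}$ be a finite group; equip $H\wr G$ with the word metric with respect to $(H\setminus\{1\})\cup S_G$. If $\mathrm{dim}_{AN}(G)\le n$, then for any $k\ge n$ the $k$-dimensional control function of $H\wr G$ is weakly equivalent to $t\mapsto 2^t$; that is, there is a $k$-dimensional control function of $H\wr G$ weakly dominated by $2^t$, and every $k$-dimensional control function of $H\wr G$ weakly dominates $2^t$.
   Context: Wreath product: $H\wr G$ is the set of pairs $(f,g)$, $f:G\to H$ finitely supported, with $(f_1,g_1)(f_2,g_2)=(f_1\cdot(g_1f_2),g_1g_2)$ where $(gf)(\gamma)=f(g^{-1}\gamma)$. Growth function $\gamma(r)=\#\{g:|g|_{S_G}<r\}$; exponential growth means $\gamma$ is weakly equivalent to $2^t$ (equivalently $\lim_r\gamma(r)^{1/r}>1$). For a metric space $X$, $r>0$: $r$-components of $Y\subseteq X$ are classes of points joined by sequences in $Y$ with consecutive distances $<r$. An $m$-dimensional control function of $X$ is $D:\mathbb{R}_+\to\mathbb{R}_+\cup\{\infty\}$ such that for each $r>0$ there is a cover $\{X_0,\dots,X_m\}$ of $X$ such that every open ball $B(x,r)$ lies in some $X_i$ and every $r$-component of each $X_i$ has diameter at most $D(r)$. $\mathrm{dim}_{AN}(X)$ is the smallest $m$ such that $X$ has an $m$-dimensional control function $D(r)=Cr$ with $C>0$. $f$ weakly dominates $g$ if there are $\lambda\ge1$, $C\ge0$ with $g(t)\le\lambda f(\lambda t+C)+C$ for all $t\ge0$; weakly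 equivalent means each weakly dominates the other. *)

From Stdlib Require Import Reals List Relations ClassicalEpsilon.
From Coquelicot Require Import Rbar.
Open Scope R_scope.

Record group := Group {
  gcar :> Type;
  gmul : gcar -> gcar -> gcar;
  gone : gcar;
  ginv : gcar -> gcar;
  gmulA : forall x y z, gmul x (gmul y z) = gmul (gmul x y) z;
  gmul1l : forall x, gmul gone x = x;
  gmul1r : forall x, gmul x gone = x;
  gmulVl : forall x, gmul (ginv x) x = gone;
  gmulVr : forall x, gmul x (ginv x) = gone
}.
Arguments gmul {g}. Arguments gone {g}. Arguments ginv {g}.

Definition finite_group (H : group) : Prop :=
  exists l : list H, forall h : H, In h l.

Definition word_le {X : Type} (mul : X -> X -> X) (one : X) (gen : X -> Prop)
  (x : X) (n : nat) : Prop :=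
  exists l : list X, (length l <= n)%nat /\ Forall gen l /\ fold_right mul one l = x.

(* the word length: the least such n (chosen classically; it exists whenever
   x lies in the generated subgroup) *)
Definition word_len {X : Type} (mul : X -> X -> X) (one : X) (gen : X -> Prop)
  (x : X) : nat :=
  epsilon (inhabits 0%nat)
    (fun n => word_le mul one gen x n /\ forall m, word_le mul one gen x m -> (n <= m)%nat).

Definition word_dist {X : Type} (mul : X -> X -> X) (one : X) (inv : X -> X)
  (gen : X -> Prop) (x y : X) : R :=
  INR (word_len mul one gen (mul (inv x) y)).

Definition genG (G : group) (S : list G) (x : G) : Prop := In x S \/ In (ginv x) S.

Definition generates (G : group) (S : list G) : Prop :=
  forall x : G, exists n, word_le gmul gone (genG G S) x n.

Definition distG (G : group) (S : list G) : G -> G -> R :=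
  word_dist gmul gone ginv (genG G S).

Definition growth (G : group) (S : list G) (r : R) : nat :=
  epsilon (inhabits 0%nat)
    (fun m => exists l : list G, NoDup l /\ length l = m /\
       forall x : G, In x l <-> INR (word_len gmul gone (genG G S) x) < r).

Definition weakly_dominates (f g : R -> Rbar) : Prop :=
  exists lam C : R, 1 <= lam /\ 0 <= C /\
    forall t, 0 <= t -> Rbar_le (g t) (Rbar_plus (Rbar_mult lam (f (lam * t + C))) C).

Definition weakly_equiv (f g : R -> Rbar) : Prop :=
  weakly_dominates f g /\ weakly_dominates g f.

Definition exp2 : R -> Rbar := fun t => Finite (Rpower 2 t).

Definition exp_growth (G : group) (S : list G) : Prop :=
  weakly_equiv (fun t => Finite (INR (growth G S t))) exp2.

Definition r_conn {X : Type} (dom : X -> Prop) (d : X -> X -> R) (Y : X -> Prop)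
  (r : R) : X -> X -> Prop :=
  clos_refl_trans X (fun a b => dom a /\ Y a /\ dom b /\ Y b /\ d a b < r).

Definition control_function {X : Type} (dom : X -> Prop) (d : X -> X -> R)
  (m : nat) (D : R -> Rbar) : Prop :=
  (forall t, 0 <= t -> Rbar_le (Finite 0) (D t)) /\
  forall r, 0 < r ->
    exists Xs : nat -> X -> Prop,
      (forall x, dom x -> exists i, (i <= m)%nat /\ Xs i x) /\
      (forall x, dom x -> exists i, (i <= m)%nat /\
          forall y, dom y -> d x y < r -> Xs i y) /\
      (forall i, (i <= m)%nat -> forall x y, dom x -> Xs i x ->
          r_conn dom d (Xs i) r x y -> Rbar_le (Finite (d x y)) (D r)).

Definition dimAN_le {X : Type} (dom : X -> Prop) (d : X -> X -> R) (n : nat) : Prop :=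
  exists m, (m <= n)%nat /\ exists C, 0 < C /\
    control_function dom d m (fun r => Finite (C * r)).

(** * Wreath product H wr G: pairs (f,g), f : G -> H finitely supported *)
Definition wr (G H : group) : Type := ((G -> H) * G)%type.

Definition wr_fs (G H : group) (x : wr G H) : Prop :=
  exists l : list G, forall y : G, fst x y <> gone -> In y l.

(* (f1,g1)(f2,g2) = (f1 . (g1 f2), g1 g2),  (g f)(y) = f (g^{-1} y) *)
Definition wr_mul (G H : group) (x y : wr G H) : wr G H :=
  (fun z => gmul (fst x z) (fst y (gmul (ginv (snd x)) z)), gmul (snd x) (snd y)).

Definition wr_one (G H : group) : wr G H := (fun _ => gone, gone).

Definition wr_inv (G H : group) (x : wr G H) : wr G H :=
  (fun z => ginv (fst x (gmul (snd x) z)), ginv (snd x)).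

(* generators (H \ {1}) ∪ S_G, with H embedded at the identity of G,
   together with inverses of S_G *)
Definition wr_gen (G H : group) (S : list G) (x : wr G H) : Prop :=
  (snd x = gone /\ fst x gone <> gone /\ forall z : G, z <> gone -> fst x z = gone)
  \/ ((forall z : G, fst x z = gone) /\ genG G S (snd x)).

Definition wr_dist (G H : group) (S : list G) : wr G H -> wr G H -> R :=
  word_dist (wr_mul G H) (wr_one G H) (wr_inv G H) (wr_gen G H S).

(* Upper bound: pull an m-dimensional cover {U_i} of G with control function C r back along
   (f, g) |-> g.  Along an r-chain in the pullback of U_i the base point stays in an r-component
   of U_i, and a lamp can only change within distance r of the current base point.  So two
   points of one r-component differ by a base displacement of length at most C r and a lamp
   configuration supported in the ball of radius (C + 1) r; the word length of such an element
   is at most gamma((C + 1) r) (2 (C + 1) r + 1) + C r, which is exponential in r.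

   Lower bound: lighting a fixed lamp h <> 1 on subsets of the ball B(rho) embeds the Hamming
   cube of dimension N = gamma(rho), with neighbours at distance < 2 rho + 1 and Hamming
   distance bounded by the wreath distance.  Cover the cube by k + 1 sets such that every
   vertex lies in one of them together with all its neighbours; colour each vertex by such a
   set and compare it with a fixed representative of its component.  Double counting over
   (vertex, coordinate) pairs shows that some component has Hamming diameter at least
   N / (k + 2).  Hence D(2 rho + 1) >= gamma(rho) / (k + 2), which is exponential in rho. *)

From Stdlib Require Import Reals List Relations ClassicalEpsilon Classical
  FunctionalExtensionality PropExtensionality Wf_nat FinFun Lia Lra Bool.
From Coquelicot Require Import Rbar.
Open Scope R_scope.

Section GroupFacts.
Context {Γ : group}.

Lemma gmulK (a x : Γ) : gmul (ginv a) (gmul a x) = x.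
Proof. now rewrite gmulA, gmulVl, gmul1l. Qed.

Lemma gmulKV (a x : Γ) : gmul a (gmul (ginv a) x) = x.
Proof. now rewrite gmulA, gmulVr, gmul1l. Qed.

Lemma gmulI (a x y : Γ) : gmul a x = gmul a y -> x = y.
Proof. intro E. now rewrite <- (gmulK a x), E, gmulK. Qed.

Lemma ginvK (x : Γ) : ginv (ginv x) = x.
Proof. apply (gmulI (ginv x)). now rewrite gmulVr, gmulVl. Qed.

Lemma ginvM (x y : Γ) : ginv (gmul x y) = gmul (ginv y) (ginv x).
Proof.
  apply (gmulI (gmul x y)). rewrite gmulVr, <- gmulA, gmulKV. symmetry; apply gmulVr.
Qed.

Lemma ginv1 : ginv (@gone Γ) = gone.
Proof. rewrite <- (gmul1l Γ (ginv gone)). apply gmulVr. Qed.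

Lemma gmulV_eq1 (a b : Γ) : gmul (ginv a) b = gone -> b = a.
Proof. intro E. now rewrite <- (gmulKV a b), E, gmul1r. Qed.

Lemma fold_right_gmul_app (l1 l2 : list Γ) :
  fold_right gmul gone (l1 ++ l2) = gmul (fold_right gmul gone l1) (fold_right gmul gone l2).
Proof. induction l1 as [|a l IH]; simpl; [now rewrite gmul1l | now rewrite IH, gmulA]. Qed.

End GroupFacts.

Definition classic_eq_dec {T : Type} (x y : T) : {x = y} + {x <> y} :=
  excluded_middle_informative (x = y).

Section WordLength.
Variables (X : group) (gen : X -> Prop).
Local Notation wle := (word_le gmul gone gen).
Local Notation len := (word_len gmul gone gen).

Lemma word_le_mono x n m : wle x n -> (n <= m)%nat -> wle x m.
Proof. intros [l [Hl Hx]] Hnm. exists l. split; [lia | exact Hx]. Qed.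

Lemma word_le_one : wle gone 0.
Proof. exists nil. repeat split; auto. Qed.

Lemma word_le_gen x : gen x -> wle x 1.
Proof. intro Hx. exists (x :: nil). simpl. rewrite gmul1r. repeat split; auto. Qed.

Lemma word_le_mul x y n m : wle x n -> wle y m -> wle (gmul x y) (n + m).
Proof.
  intros [l1 [Hl1 [Hg1 <-]]] [l2 [Hl2 [Hg2 <-]]]. exists (l1 ++ l2).
  rewrite length_app, fold_right_gmul_app.
  split; [lia | split; [now apply Forall_app | reflexivity]].
Qed.

Lemma word_le_inv x n :
  (forall y, gen y -> gen (ginv y)) -> wle x n -> wle (ginv x) n.
Proof.
  intros gen_inv [l [Hl [Hg <-]]]. revert n Hl.
  induction Hg as [|a l Ha Hg IH]; intros n Hl; simpl.
  - rewrite ginv1. apply word_le_mono with 0%nat; [apply word_le_one | lia].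
  - simpl in Hl. rewrite ginvM. replace n with (n - 1 + 1)%nat by lia.
    apply word_le_mul; [apply IH; lia | now apply word_le_gen, gen_inv].
Qed.

Lemma word_len_spec x n : wle x n ->
  wle x (len x) /\ forall m, wle x m -> (len x <= m)%nat.
Proof.
  intro Hx. unfold word_len. apply epsilon_spec.
  destruct (dec_inh_nat_subset_has_unique_least_element (wle x)) as [l [Hl _]].
  - intro m. apply classic.
  - now exists n.
  - now exists l.
Qed.

Lemma word_le_len x n : wle x n -> wle x (len x).
Proof. intro Hx. apply (word_len_spec x n Hx). Qed.

Lemma word_len_le x n : wle x n -> (len x <= n)%nat.
Proof. intro Hx. now apply (word_len_spec x n Hx). Qed.

Lemma word_len_one : len gone = 0%nat.
Proof. pose proof (word_len_le _ _ word_le_one). lia. Qed.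

Lemma word_len_mul x y n m : wle x n -> wle y m -> (len (gmul x y) <= len x + len y)%nat.
Proof. intros Hx Hy. apply word_len_le, word_le_mul; eapply word_le_len; eauto. Qed.

End WordLength.

Section WreathGroup.
Variables G H : group.

Lemma wr_ext (x y : wr G H) : (forall z, fst x z = fst y z) -> snd x = snd y -> x = y.
Proof.
  destruct x, y; simpl; intros E1 E2. f_equal; [now apply functional_extensionality | easy].
Qed.

Lemma wr_mulA x y z : wr_mul G H x (wr_mul G H y z) = wr_mul G H (wr_mul G H x y) z.
Proof. apply wr_ext; simpl; [intro w; now rewrite gmulA, ginvM, gmulA | apply gmulA]. Qed.

Lemma wr_mul1l x : wr_mul G H (wr_one G H) x = x.
Proof. apply wr_ext; simpl; [intro w|]; now rewrite ?ginv1, !gmul1l. Qed.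

Lemma wr_mul1r x : wr_mul G H x (wr_one G H) = x.
Proof. apply wr_ext; simpl; [intro w|]; now rewrite !gmul1r. Qed.

Lemma wr_mulVl x : wr_mul G H (wr_inv G H x) x = wr_one G H.
Proof. apply wr_ext; simpl; [intro w; now rewrite ginvK, gmulVl | apply gmulVl]. Qed.

Lemma wr_mulVr x : wr_mul G H x (wr_inv G H x) = wr_one G H.
Proof. apply wr_ext; simpl; [intro w; now rewrite gmulKV, gmulVr | apply gmulVr]. Qed.

Definition wreath : group :=
  Group (wr G H) (wr_mul G H) (wr_one G H) (wr_inv G H)
    wr_mulA wr_mul1l wr_mul1r wr_mulVl wr_mulVr.

Lemma wr_inv_mul_fst x y q :
  fst (wr_mul G H (wr_inv G H x) y) q
  = gmul (ginv (fst x (gmul (snd x) q))) (fst y (gmul (snd x) q)).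
Proof. simpl. now rewrite ginvK. Qed.

End WreathGroup.

Lemma clos_rt_map {A B : Type} (R1 : A -> A -> Prop) (R2 : B -> B -> Prop) (f : A -> B) :
  (forall a b, R1 a b -> R2 (f a) (f b)) ->
  forall a b, clos_refl_trans A R1 a b -> clos_refl_trans B R2 (f a) (f b).
Proof.
  intros HR a b Hab.
  induction Hab; [now apply rt_step, HR | apply rt_refl | eapply rt_trans; eauto].
Qed.

Section ControlFunctions.
Variables (X : Type) (dom : X -> Prop) (d : X -> X -> R).

Lemma r_conn_mono (Y Y' : X -> Prop) r x y :
  (forall z, Y z -> Y' z) -> r_conn dom d Y r x y -> r_conn dom d Y' r x y.
Proof.
  intro HY. apply (clos_rt_map _ _ (fun z => z)).
  intros a b [Ha [HYa [Hb [HYb Hab]]]]. repeat split; auto.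
Qed.

Lemma control_function_mono m k D :
  (m <= k)%nat -> control_function dom d m D -> control_function dom d k D.
Proof.
  intros Hmk [HD Hcf]. split; [exact HD|]. intros r Hr.
  destruct (Hcf r Hr) as [Xs [Hcov [Hball Hdiam]]].
  exists (fun i x => (i <= m)%nat /\ Xs i x). split; [|split].
  - intros x Hx. destruct (Hcov x Hx) as [i [Hi Hxi]]. exists i. split; [lia | auto].
  - intros x Hx. destruct (Hball x Hx) as [i [Hi Hxi]]. exists i. split; [lia|].
    intros y Hy Hxy. split; [exact Hi | now apply Hxi].
  - intros i _ x y Hx [Hi Hxi] Hc. apply (Hdiam i Hi x y Hx Hxi).
    eapply r_conn_mono; [|exact Hc]. now intros z [_ Hz].
Qed.

End ControlFunctions.

Section WreathWords.
Variables (G H : group) (S : list G).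
Local Notation wleG := (word_le (@gmul G) gone (genG G S)).
Local Notation lenG := (word_len (@gmul G) gone (genG G S)).
Local Notation wleW := (word_le (wr_mul G H) (wr_one G H) (wr_gen G H S)).
Local Notation lenW := (word_len (wr_mul G H) (wr_one G H) (wr_gen G H S)).

Definition shift (g : G) : wr G H := (fun _ => gone, g).

Definition lamp (q : G) (h : H) : wr G H :=
  (fun z => if classic_eq_dec z q then h else gone, gone).

Lemma genG_inv x : genG G S x -> genG G S (ginv x).
Proof. unfold genG. rewrite ginvK. tauto. Qed.

Lemma word_le_shift g n : wleG g n -> wleW (shift g) n.
Proof.
  intros [l [Hl [Hg <-]]]. exists (map shift l). rewrite length_map.
  split; [exact Hl | split].
  - apply Forall_map. eapply Forall_impl; [|exact Hg]. intros a Ha. now right.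
  - clear Hl Hg. induction l as [|a l IH]; simpl; [reflexivity|]. rewrite IH.
    apply wr_ext; simpl; [intro; apply gmul1l | reflexivity].
Qed.

Lemma lamp_conj q h :
  lamp q h = wr_mul G H (wr_mul G H (shift q) (lamp gone h)) (shift (ginv q)).
Proof.
  apply wr_ext; simpl; [intro z | now rewrite gmul1r, gmulVr].
  rewrite gmul1r, gmul1l.
  destruct (classic_eq_dec z q) as [Ezq|Hzq], (classic_eq_dec (gmul (ginv q) z) gone) as [E|E];
    try reflexivity.
  - subst. now rewrite gmulVl in E.
  - elim Hzq. now apply gmulV_eq1.
Qed.

Lemma word_le_lamp q h n : wleG q n -> wleW (lamp q h) (2 * n + 1).
Proof.
  intro Hq. destruct (classic (h = gone)) as [->|Hh].
  - replace (lamp q gone) with (wr_one G H).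
    + apply (word_le_mono (wreath G H)) with 0%nat; [apply (word_le_one (wreath G H)) | lia].
    + apply wr_ext; simpl; [intro z; now destruct classic_eq_dec | reflexivity].
  - rewrite lamp_conj. replace (2 * n + 1)%nat with (n + 1 + n)%nat by lia.
    apply (word_le_mul (wreath G H)); [apply (word_le_mul (wreath G H)) |].
    + now apply word_le_shift.
    + apply (word_le_gen (wreath G H)). left. simpl. split; [reflexivity | split].
      * now destruct classic_eq_dec.
      * intros z Hz. now destruct classic_eq_dec.
    + apply word_le_shift, (word_le_inv G); [apply genG_inv | exact Hq].
Qed.

Lemma word_le_snd x n : wleW x n -> wleG (snd x) n.
Proof.
  intros [l [Hl [Hg <-]]]. revert n Hl.
  induction Hg as [|a l Ha Hg IH]; intros n Hl; simpl in *.
  - apply word_le_mono with 0%nat; [apply word_le_one | lia].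
  - destruct Ha as [[Ea _] | [_ Ea]].
    + rewrite Ea, gmul1l. apply IH; lia.
    + replace n with (1 + (n - 1))%nat by lia.
      apply word_le_mul; [now apply word_le_gen | apply IH; lia].
Qed.

Lemma word_le_support x n : wleW x n ->
  exists L, (length L <= n)%nat /\ (forall q, fst x q <> gone -> In q L) /\
    forall q, In q L -> exists m, (m < n)%nat /\ wleG q m.
Proof.
  intros [l [Hl [Hg <-]]]. revert n Hl.
  induction Hg as [|a l Ha Hg IH]; intros n Hl; simpl in Hl.
  - exists nil. split; [simpl; lia | split; [|easy]]. intros q Hq. now elim Hq.
  - destruct (IH (n - 1)%nat ltac:(lia)) as [L [HL [Hsupp Hlen]]].
    set (w := fold_right (wr_mul G H) (wr_one G H) l) in *. simpl.
    destruct Ha as [[Ea [_ Ea']] | [Ea Es]].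
    + exists (gone :: L). split; [simpl; lia | split].
      * intros q Hq. rewrite Ea, ginv1, gmul1l in Hq.
        destruct (classic (q = gone)) as [->|Hq1]; [now left | right].
        apply Hsupp. now rewrite Ea', gmul1l in Hq.
      * intros q [<-|Hq]; [exists 0%nat; split; [lia | apply word_le_one] |].
        destruct (Hlen q Hq) as [m [Hm Hw]]. exists m. split; [lia | exact Hw].
    + exists (map (gmul (snd a)) L). split; [rewrite length_map; lia | split].
      * intros q Hq. rewrite Ea, gmul1l in Hq.
        rewrite <- (gmulKV (snd a) q). now apply in_map, Hsupp.
      * intros q Hq. apply in_map_iff in Hq. destruct Hq as [q' [<- Hq']].
        destruct (Hlen q' Hq') as [m [Hm Hw]]. exists (1 + m)%nat. split; [lia|].
        apply word_le_mul; [now apply word_le_gen | exact Hw].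
Qed.

Lemma word_le_support_card x n L : wleW x n -> NoDup L ->
  (forall q, In q L -> fst x q <> gone) -> (length L <= n)%nat.
Proof.
  intros Hx HL Hsupp. destruct (word_le_support x n Hx) as [L' [HL' [Hin _]]].
  enough (length L <= length L')%nat by lia.
  apply NoDup_incl_length; [exact HL | intros q Hq; now apply Hin, Hsupp].
Qed.

Definition lamps_cost (L : list G) : nat := list_sum (map (fun q => 2 * lenG q + 1)%nat L).

Lemma lamps_cost_cons q L : lamps_cost (q :: L) = (2 * lenG q + 1 + lamps_cost L)%nat.
Proof. reflexivity. Qed.

Lemma lamps_cost_le (L : list G) (rho : R) : (forall q, In q L -> INR (lenG q) < rho) ->
  INR (lamps_cost L) <= INR (length L) * (2 * rho + 1).
Proof.
  induction L as [|q L IH]; intro HL; simpl length; [simpl; lra|].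
  rewrite lamps_cost_cons, !plus_INR, mult_INR, (S_INR (length L)).
  assert (INR (lenG q) < rho) by (apply HL; now left).
  assert (INR (lamps_cost L) <= INR (length L) * (2 * rho + 1))
    by (apply IH; intros; apply HL; now right).
  simpl (INR 2); simpl (INR 1). lra.
Qed.

Lemma wr_fs_inv_mul x y : wr_fs G H x -> wr_fs G H y ->
  wr_fs G H (wr_mul G H (wr_inv G H x) y).
Proof.
  intros [Lx Hx] [Ly Hy]. exists (map (gmul (ginv (snd x))) (Lx ++ Ly)). intros q Hq.
  rewrite wr_inv_mul_fst in Hq. rewrite <- (gmulK (snd x) q). apply in_map, in_or_app.
  destruct (classic (fst x (gmul (snd x) q) = gone)) as [E|E]; [right | left; now apply Hx].
  apply Hy. intro E'. apply Hq. now rewrite E, E', ginv1, gmul1l.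
Qed.

Hypothesis gens : generates G S.

Lemma word_le_lenG g : wleG g (lenG g).
Proof. destruct (gens g) as [n Hn]. exact (word_le_len G _ _ _ Hn). Qed.

Lemma distG_triangle a b c : distG G S a c <= distG G S a b + distG G S b c.
Proof.
  unfold distG, word_dist. rewrite <- plus_INR. apply le_INR.
  replace (gmul (ginv a) c) with (gmul (gmul (ginv a) b) (gmul (ginv b) c))
    by now rewrite <- gmulA, gmulKV.
  apply (word_len_mul G) with (lenG (gmul (ginv a) b)) (lenG (gmul (ginv b) c));
    apply word_le_lenG.
Qed.

(* Light the lamps of L one at a time, walking to each of them and back. *)
Lemma word_le_config (L : list G) x :
  (forall z, fst x z <> gone -> In z L) -> wleW x (lamps_cost L + lenG (snd x)).
Proof.
  destruct x as [phi g]; simpl. intro Hsupp.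
  replace (phi, g) with (wr_mul G H (phi, gone) (shift g))
    by (apply wr_ext; simpl; [intro; apply gmul1r | apply gmul1l]).
  apply (word_le_mul (wreath G H)); [| apply word_le_shift, word_le_lenG].
  clear g. revert phi Hsupp. induction L as [|q L IH]; intros phi Hsupp.
  - replace (phi, gone) with (wr_one G H); [apply (word_le_one (wreath G H)) |].
    apply wr_ext; simpl; [intro z | reflexivity].
    destruct (classic (phi z = gone)) as [E|E]; [easy | destruct (Hsupp z E)].
  - set (phi' := fun z => if classic_eq_dec z q then gone else phi z).
    replace (phi, gone) with (wr_mul G H (lamp q (phi q)) (phi', gone)).
    + rewrite lamps_cost_cons.
      apply (word_le_mul (wreath G H)); [apply word_le_lamp, word_le_lenG | apply IH].
      intros z Hz. unfold phi' in Hz. destruct classic_eq_dec; [easy|].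
      destruct (Hsupp z Hz); [congruence | assumption].
    + apply wr_ext; simpl; [intro z | apply gmul1l]. rewrite ginv1, gmul1l. unfold phi'.
      destruct classic_eq_dec as [->|]; [apply gmul1r | apply gmul1l].
Qed.

Lemma word_le_wr_fs x : wr_fs G H x -> wleW x (lenW x).
Proof. intros [L HL]. exact (word_le_len (wreath G H) _ _ _ (word_le_config L x HL)). Qed.

Lemma wr_dist_le_config x y L :
  (forall q, fst (wr_mul G H (wr_inv G H x) y) q <> gone -> In q L) ->
  wr_dist G H S x y <= INR (lamps_cost L) + distG G S (snd x) (snd y).
Proof.
  intro Hsupp. unfold wr_dist, distG, word_dist. rewrite <- plus_INR. apply le_INR.
  exact (word_len_le (wreath G H) _ _ _ (word_le_config L _ Hsupp)).
Qed.

Lemma wr_dist_refl x : wr_dist G H S x x = 0.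
Proof. unfold wr_dist, word_dist. now rewrite wr_mulVl, (word_len_one (wreath G H)). Qed.

Lemma wr_dist_snd x y : wr_fs G H x -> wr_fs G H y ->
  distG G S (snd x) (snd y) <= wr_dist G H S x y.
Proof.
  intros Hx Hy. apply le_INR, (word_len_le G).
  exact (word_le_snd _ _ (word_le_wr_fs _ (wr_fs_inv_mul x y Hx Hy))).
Qed.

Lemma wr_dist_lamp x y p : wr_fs G H x -> wr_fs G H y -> fst y p <> fst x p ->
  distG G S (snd x) p < wr_dist G H S x y.
Proof.
  intros Hx Hy Hp.
  destruct (word_le_support _ _ (word_le_wr_fs _ (wr_fs_inv_mul x y Hx Hy)))
    as [L [_ [Hsupp Hlen]]].
  destruct (Hlen (gmul (ginv (snd x)) p)) as [m [Hm Hw]].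
  - apply Hsupp. rewrite wr_inv_mul_fst, gmulKV. intro E. apply Hp. now apply gmulV_eq1.
  - unfold distG, wr_dist, word_dist. apply lt_INR.
    pose proof (word_len_le G _ _ _ Hw). lia.
Qed.

End WreathWords.

Section Balls.
Variables (G : group) (Sg : list G).
Hypothesis gens : generates G Sg.
Local Notation lenG := (word_len (@gmul G) gone (genG G Sg)).

Fixpoint ball_list (n : nat) : list G :=
  match n with
  | O => gone :: nil
  | Datatypes.S n' =>
      ball_list n' ++ flat_map (fun s => map (gmul s) (ball_list n')) (Sg ++ map ginv Sg)
  end.

Lemma ball_list_word (l : list G) n : Forall (genG G Sg) l -> (length l <= n)%nat ->
  In (fold_right gmul gone l) (ball_list n).
Proof.
  revert l. induction n as [|n IH]; intros l Hl Hn.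
  - destruct l; simpl in *; [now left | lia].
  - destruct l as [|a l]; simpl; apply in_or_app; [left; apply (IH nil); simpl; auto; lia|].
    right. inversion Hl as [|? ? Ha Hl']; subst. apply in_flat_map. exists a. split.
    + apply in_or_app. destruct Ha as [Ha|Ha]; [now left | right].
      rewrite <- (ginvK a). now apply in_map.
    + apply in_map, IH; [exact Hl' | simpl in Hn; lia].
Qed.

Lemma ball_enum rho : exists l : list G, NoDup l /\ forall x, In x l <-> INR (lenG x) < rho.
Proof.
  destruct (INR_unbounded rho) as [M HM].
  exists (nodup classic_eq_dec
            (filter (fun x => if Rlt_dec (INR (lenG x)) rho then true else false) (ball_list M))).
  split; [apply NoDup_nodup|]. intro x. rewrite nodup_In, filter_In.
  destruct (Rlt_dec (INR (lenG x)) rho) as [Hx|Hx]; [|intuition easy].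
  split; [easy|]. intros _. split; [|reflexivity].
  destruct (gens x) as [n Hn]. destruct (word_le_len G _ _ _ Hn) as [l [Hl [Hg <-]]].
  apply ball_list_word; [exact Hg|].
  assert (lenG (fold_right gmul gone l) < M)%nat by (apply INR_lt; lra). lia.
Qed.

Lemma growth_spec rho : exists l : list G,
  NoDup l /\ length l = growth G Sg rho /\ forall x, In x l <-> INR (lenG x) < rho.
Proof.
  unfold growth. apply (epsilon_spec (inhabits 0%nat) (fun m => exists l : list G,
    NoDup l /\ length l = m /\ forall x : G, In x l <-> INR (lenG x) < rho)).
  destruct (ball_enum rho) as [l [Hl Hx]]. now exists (length l), l.
Qed.

End Balls.

Lemma Rpower2_ge1 x : 0 <= x -> 1 <= Rpower 2 x.
Proof. intro Hx. rewrite <- (Rpower_O 2) by lra. apply Rle_Rpower; lra. Qed.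

Lemma one_plus_le_Rpower2 x : 0 <= x -> 1 + x <= Rpower 2 (2 * x).
Proof.
  intro Hx. unfold Rpower. pose proof (exp_ineq1_le (2 * x * ln 2)). pose proof ln_lt_2. nra.
Qed.

Lemma Rbar_mult_pinfty (x : R) : 0 < x -> Rbar_mult x p_infty = p_infty.
Proof.
  intro Hx. simpl. destruct (Rle_dec 0 x) as [H0|]; [|lra].
  destruct (Rle_lt_or_eq_dec 0 x H0); [reflexivity | lra].
Qed.

Lemma Rbar_mult_minfty (x : R) : 0 < x -> Rbar_mult x m_infty = m_infty.
Proof.
  intro Hx. simpl. destruct (Rle_dec 0 x) as [H0|]; [|lra].
  destruct (Rle_lt_or_eq_dec 0 x H0); [reflexivity | lra].
Qed.

Lemma exp2_dominates_poly_times (g : R -> R) (a : R) : 0 < a ->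
  weakly_dominates exp2 (fun s => Finite (g s)) ->
  weakly_dominates exp2 (fun t => Finite (g (a * t) * (2 * (a * t) + 1) + a * t)).
Proof.
  intros Ha [l [C [Hl [HC Hg]]]].
  set (b := l * a + 4 * a). set (M := l + C + 1).
  exists (b + M), C. split; [unfold b, M; nra | split; [lra|]].
  intros t Ht. simpl.
  assert (Hat : 0 <= a * t) by nra.
  set (E := Rpower 2 (l * (a * t) + C)). set (F := Rpower 2 (2 * (2 * (a * t)))).
  assert (HE : 1 <= E) by (apply Rpower2_ge1; nra).
  assert (HF : 1 + 2 * (a * t) <= F) by (apply one_plus_le_Rpower2; lra).
  assert (Hga : g (a * t) <= l * E + C) by exact (Hg (a * t) Hat).
  assert (Hprod : g (a * t) * (2 * (a * t) + 1) + a * t <= M * (E * F)).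
  { assert (g (a * t) * (2 * (a * t) + 1) <= (l * E + C) * F).
    { destruct (Rle_lt_dec 0 (g (a * t))); [apply Rmult_le_compat; lra|].
      assert (0 <= (l * E + C) * F) by (apply Rmult_le_pos; nra). nra. }
    assert (0 <= C * (F * (E - 1))) by (apply Rmult_le_pos; nra).
    unfold M. nra. }
  assert (HEF : E * F = Rpower 2 (b * t + C)).
  { unfold E, F. rewrite <- Rpower_plus. f_equal. unfold b. ring. }
  assert (Hmono : Rpower 2 (b * t + C) <= Rpower 2 ((b + M) * t + C))
    by (apply Rle_Rpower; unfold M; nra).
  assert (1 <= Rpower 2 (b * t + C)) by (apply Rpower2_ge1; unfold b; nra).
  assert (0 <= b) by (unfold b; nra).
  rewrite HEF in Hprod. unfold M in *. nra.
Qed.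

Section UpperBound.
Variables (G H : group) (S : list G).
Hypothesis gens : generates G S.
Local Notation lenG := (word_len (@gmul G) gone (genG G S)).

Lemma r_conn_pullback (U : G -> Prop) r x y : wr_fs G H x ->
  r_conn (wr_fs G H) (wr_dist G H S) (fun z => U (snd z)) r x y ->
  r_conn (fun _ => True) (distG G S) U r (snd x) (snd y) /\
  forall p, fst y p <> fst x p ->
    exists g, r_conn (fun _ => True) (distG G S) U r (snd x) g /\ distG G S g p < r.
Proof.
  intros Hx Hc. apply clos_rt_rtn1 in Hc.
  induction Hc as [|y z [Hy [Uy [Hz [Uz Hyz]]]] _ [IHbase IHlamp]].
  - split; [apply rt_refl | intros p Hp; now elim Hp].
  - split.
    + eapply rt_trans; [exact IHbase | apply rt_step]. repeat split; auto.
      eapply Rle_lt_trans; [apply wr_dist_snd | exact Hyz]; auto.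
    + intros p Hp. destruct (classic (fst y p = fst x p)) as [E|E]; [|now apply IHlamp].
      exists (snd y). split; [exact IHbase|].
      eapply Rlt_trans; [apply (wr_dist_lamp G H S gens y z) | exact Hyz]; auto. congruence.
Qed.

Definition lamplighter_bound (a r : R) : R :=
  INR (growth G S (a * r)) * (2 * (a * r) + 1) + a * r.

Lemma pullback_component_dist (U : G -> Prop) (C r : R) x y : 0 <= r ->
  (forall g, r_conn (fun _ => True) (distG G S) U r (snd x) g -> distG G S (snd x) g <= C * r) ->
  wr_fs G H x ->
  r_conn (wr_fs G H) (wr_dist G H S) (fun z => U (snd z)) r x y ->
  wr_dist G H S x y <= lamplighter_bound (C + 1) r.
Proof.
  intros Hr Hdiam Hx Hc. destruct (r_conn_pullback U r x y Hx Hc) as [Hbase Hlamp].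
  destruct (growth_spec G S gens ((C + 1) * r)) as [B [_ [HlenB HinB]]].
  assert (Hsupp : forall q, fst (wr_mul G H (wr_inv G H x) y) q <> gone -> In q B).
  { intros q Hq. apply HinB. rewrite wr_inv_mul_fst in Hq.
    destruct (Hlamp (gmul (snd x) q)) as [g [Hg Hgq]].
    { intro E. apply Hq. rewrite E. apply gmulVl. }
    pose proof (distG_triangle G S gens (snd x) g (gmul (snd x) q)) as Htri.
    assert (E : distG G S (snd x) (gmul (snd x) q) = INR (lenG q))
      by (unfold distG, word_dist; now rewrite gmulK).
    pose proof (Hdiam g Hg). nra. }
  pose proof (wr_dist_le_config G H S gens x y B Hsupp) as Hdist.
  pose proof (lamps_cost_le G S B _ (fun q Hq => proj1 (HinB q) Hq)) as Hcost.
  pose proof (Hdiam _ Hbase) as Hsnd. rewrite HlenB in Hcost.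
  unfold lamplighter_bound. nra.
Qed.

Lemma wreath_control_function (m : nat) (C : R) : 0 <= C ->
  control_function (fun _ : G => True) (distG G S) m (fun r => Finite (C * r)) ->
  control_function (wr_fs G H) (wr_dist G H S) m (fun r => Finite (lamplighter_bound (C + 1) r)).
Proof.
  intros HC [_ HcfG]. split.
  - intros t Ht. simpl. unfold lamplighter_bound.
    assert (0 <= (C + 1) * t) by (apply Rmult_le_pos; lra).
    pose proof (pos_INR (growth G S ((C + 1) * t))). nra.
  - intros r Hr. destruct (HcfG r Hr) as [U [Ucov [Uball Udiam]]].
    exists (fun i x => U i (snd x)). split; [|split].
    + intros x _. exact (Ucov (snd x) I).
    + intros x Hx. destruct (Uball (snd x) I) as [i [Hi Hb]]. exists i. split; [exact Hi|].
      intros y Hy Hd. apply Hb; [exact I|].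
      eapply Rle_lt_trans; [apply (wr_dist_snd G H S gens) | exact Hd]; auto.
    + intros i Hi x y Hx HUx Hc. apply (pullback_component_dist (U i) C r x y); auto; [lra|].
      intros g Hg. exact (Udiam i Hi (snd x) g I HUx Hg).
Qed.

End UpperBound.

Definition sumR {A : Type} (l : list A) (F : A -> R) : R := fold_right (fun a s => F a + s) 0 l.

Lemma sumR_le {A : Type} (l : list A) (F F' : A -> R) :
  (forall a, In a l -> F a <= F' a) -> sumR l F <= sumR l F'.
Proof.
  induction l as [|a l IH]; simpl; intro HF; [lra|].
  pose proof (HF a (or_introl eq_refl)).
  assert (sumR l F <= sumR l F') by (apply IH; intros; apply HF; now right). lra.
Qed.

Lemma sumR_ext {A : Type} (l : list A) (F F' : A -> R) :
  (forall a, In a l -> F a = F' a) -> sumR l F = sumR l F'.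
Proof.
  induction l as [|a l IH]; simpl; intro HF; [reflexivity|].
  rewrite HF, IH; auto.
Qed.

Lemma sumR_const {A : Type} (l : list A) (c : R) : sumR l (fun _ => c) = INR (length l) * c.
Proof.
  induction l as [|a l IH]; [simpl; lra|]. unfold sumR in *. cbn [fold_right length].
  rewrite IH, S_INR. lra.
Qed.

Lemma sumR_plus {A : Type} (l : list A) (F F' : A -> R) :
  sumR l (fun a => F a + F' a) = sumR l F + sumR l F'.
Proof. induction l as [|a l IH]; simpl; [lra|]. rewrite IH. lra. Qed.

Lemma sumR_app {A : Type} (l1 l2 : list A) (F : A -> R) :
  sumR (l1 ++ l2) F = sumR l1 F + sumR l2 F.
Proof. induction l1 as [|a l IH]; simpl; [lra|]. rewrite IH. lra. Qed.

Lemma sumR_map {A B : Type} (l : list A) (f : A -> B) (F : B -> R) :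
  sumR (map f l) F = sumR l (fun a => F (f a)).
Proof. induction l as [|a l IH]; simpl; [reflexivity|]. now rewrite IH. Qed.

Lemma sumR_swap {A B : Type} (l1 : list A) (l2 : list B) (F : A -> B -> R) :
  sumR l1 (fun a => sumR l2 (F a)) = sumR l2 (fun b => sumR l1 (fun a => F a b)).
Proof.
  induction l1 as [|a l IH]; simpl.
  - induction l2; simpl; lra.
  - rewrite IH, <- sumR_plus. reflexivity.
Qed.

Lemma sumR_indicator (c s n : nat) (x : R) : (s <= c < s + n)%nat ->
  sumR (seq s n) (fun i => if Nat.eqb c i then x else 0) = x.
Proof.
  revert s. induction n as [|n IH]; intros s Hs; simpl; [lia|].
  destruct (Nat.eqb_spec c s) as [->|Hcs].
  - rewrite (sumR_ext _ _ (fun _ => 0)), sumR_const; [lra|].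
    intros a Ha. apply in_seq in Ha. destruct (Nat.eqb_spec s a); [lia | reflexivity].
  - rewrite IH; [lra | lia].
Qed.

Lemma INR_length_filter {A : Type} (l : list A) (p : A -> bool) :
  INR (length (filter p l)) = sumR l (fun a => if p a then 1 else 0).
Proof.
  induction l as [|a l IH]; [simpl; lra|]. unfold sumR in *. cbn [filter fold_right].
  destruct (p a); cbn [length]; rewrite ?S_INR, IH; lra.
Qed.

Fixpoint cube (N : nat) : list (list bool) :=
  match N with
  | O => nil :: nil
  | Datatypes.S n => map (cons false) (cube n) ++ map (cons true) (cube n)
  end.

Fixpoint flip (j : nat) (v : list bool) : list bool :=
  match v, j with
  | nil, _ => nil
  | b :: v', O => negb b :: v'
  | b :: v', Datatypes.S j' => b :: flip j' v'
  end.

Lemma length_in_cube N v : In v (cube N) -> length v = N.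
Proof.
  revert v; induction N as [|N IH]; simpl; intros v Hv; [now destruct Hv as [<-|[]]|].
  apply in_app_or in Hv.
  destruct Hv as [Hv|Hv]; apply in_map_iff in Hv; destruct Hv as [w [<- Hw]]; simpl; auto.
Qed.

Lemma length_cube N : length (cube N) = (2 ^ N)%nat.
Proof. induction N as [|N IH]; simpl; [reflexivity|]. rewrite length_app, !length_map, IH. lia. Qed.

Lemma sumR_cube_flip N j (F : list bool -> R) : (j < N)%nat ->
  sumR (cube N) F = sumR (cube N) (fun v => F (flip j v)).
Proof.
  revert j F. induction N as [|N IH]; intros j F Hj; [lia|]. simpl. rewrite !sumR_app, !sumR_map.
  destruct j as [|j]; simpl; [lra|].
  rewrite (IH j (fun a => F (false :: a))), (IH j (fun a => F (true :: a)));
    [reflexivity | lia | lia].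
Qed.

Lemma length_flip j v : length (flip j v) = length v.
Proof. revert j; induction v; destruct j; simpl; auto. Qed.

Lemma flipK j v : flip j (flip j v) = v.
Proof. revert j; induction v; destruct j; simpl; f_equal; auto using negb_involutive. Qed.

Lemma nth_flip j v : (j < length v)%nat -> nth j (flip j v) false = negb (nth j v false).
Proof. revert j; induction v; destruct j; simpl; intros; auto; try lia. apply IHv. lia. Qed.

Definition hamming (N : nat) (u z : list bool) : R :=
  sumR (seq 0 N) (fun j => if Bool.eqb (nth j u false) (nth j z false) then 0 else 1).

Lemma hamming_refl N u : hamming N u u = 0.
Proof.
  unfold hamming. rewrite (sumR_ext _ _ (fun _ => 0)), sumR_const; [lra|].
  intros. now rewrite eqb_reflx.
Qed.

Lemma hamming_compl N u z : INR N - hamming N u z =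
  sumR (seq 0 N) (fun j => if Bool.eqb (nth j u false) (nth j z false) then 1 else 0).
Proof.
  unfold hamming.
  replace (INR N) with (sumR (seq 0 N) (fun j =>
    (if Bool.eqb (nth j u false) (nth j z false) then 1 else 0)
    + (if Bool.eqb (nth j u false) (nth j z false) then 0 else 1))).
  - rewrite sumR_plus. lra.
  - rewrite (sumR_ext _ _ (fun _ => 1)), sumR_const, length_seq; [lra|].
    intros j _. destruct Bool.eqb; lra.
Qed.

Section CubeCover.
Variables (N k : nat) (A : nat -> list bool -> Prop) (Dr : R).

Definition cube_edge (i : nat) (a b : list bool) : Prop :=
  A i a /\ A i b /\ exists j, (j < N)%nat /\ b = flip j a.

Hypothesis star : forall v, length v = N ->
  exists i, (i <= k)%nat /\ A i v /\ forall j, (j < N)%nat -> A i (flip j v).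
Hypothesis diam : forall i u z, (i <= k)%nat -> length u = N -> A i u ->
  clos_refl_trans _ (cube_edge i) u z -> hamming N u z <= Dr.

Lemma cube_edge_sym i a b : cube_edge i a b -> cube_edge i b a.
Proof.
  intros [Ha [Hb [j [Hj ->]]]]. split; [exact Hb | split; [exact Ha|]].
  exists j. now rewrite flipK.
Qed.

Lemma cube_conn_sym i a b :
  clos_refl_trans _ (cube_edge i) a b -> clos_refl_trans _ (cube_edge i) b a.
Proof.
  induction 1; [now apply rt_step, cube_edge_sym | apply rt_refl | eapply rt_trans; eauto].
Qed.

Definition component_rep (i : nat) (u : list bool) : list bool :=
  epsilon (inhabits nil) (fun z => clos_refl_trans _ (cube_edge i) u z).

Lemma component_rep_conn i u : clos_refl_trans _ (cube_edge i) u (component_rep i u).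
Proof. unfold component_rep. apply epsilon_spec. exists u. apply rt_refl. Qed.

Lemma component_rep_eq i u u' :
  clos_refl_trans _ (cube_edge i) u u' -> component_rep i u = component_rep i u'.
Proof.
  intro Hc. unfold component_rep. f_equal. apply functional_extensionality. intro z.
  apply propositional_extensionality.
  split; intro Hz; [eapply rt_trans; [apply cube_conn_sym, Hc | exact Hz] | eapply rt_trans; eauto].
Qed.

Definition star_colour (v : list bool) : nat :=
  epsilon (inhabits 0%nat)
    (fun i => (i <= k)%nat /\ A i v /\ forall j, (j < N)%nat -> A i (flip j v)).

Lemma star_colour_spec v : length v = N ->
  (star_colour v <= k)%nat /\ A (star_colour v) v /\
  forall j, (j < N)%nat -> A (star_colour v) (flip j v).
Proof. intro Hv. unfold star_colour. apply epsilon_spec, star, Hv. Qed.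

Definition agree (i : nat) (v : list bool) (j : nat) : R :=
  if Nat.eqb (star_colour v) i
  then (if Bool.eqb (nth j v false) (nth j (component_rep i v) false) then 1 else 0)
  else 0.

Lemma diam_nonneg : 0 <= Dr.
Proof.
  destruct (star (repeat false N) (repeat_length false N)) as [i [Hi [HA _]]].
  rewrite <- (hamming_refl N (repeat false N)).
  apply (diam i); [exact Hi | apply repeat_length | exact HA | apply rt_refl].
Qed.

Lemma agree_vertex_ge v : length v = N ->
  INR N - Dr <= sumR (seq 0 N) (fun j => sumR (seq 0 (k + 1)) (fun i => agree i v j)).
Proof.
  intro Hv. destruct (star_colour_spec v Hv) as [Hc [HA _]].
  assert (hamming N v (component_rep (star_colour v) v) <= Dr)
    by (apply (diam (star_colour v)); auto; apply component_rep_conn).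
  enough (E : INR N - hamming N v (component_rep (star_colour v) v)
              = sumR (seq 0 N) (fun j => sumR (seq 0 (k + 1)) (fun i => agree i v j))) by lra.
  rewrite hamming_compl. apply sumR_ext. intros j _. unfold agree.
  rewrite (sumR_ext _ _ (fun i => if Nat.eqb (star_colour v) i then
     (if Bool.eqb (nth j v false) (nth j (component_rep (star_colour v) v) false) then 1 else 0)
     else 0)).
  - now rewrite sumR_indicator by lia.
  - intros i _. now destruct (Nat.eqb_spec (star_colour v) i) as [->|].
Qed.

Lemma agree_flip_in i u j : length u = N -> (j < N)%nat -> A i u ->
  agree i (flip j u) j
  <= (if Bool.eqb (nth j u false) (nth j (component_rep i u) false) then 0 else 1).
Proof.
  intros Hu Hj HA. unfold agree.
  destruct (Nat.eqb_spec (star_colour (flip j u)) i) as [E|E]; [|destruct Bool.eqb; lra].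
  assert (Hf : length (flip j u) = N) by now rewrite length_flip.
  destruct (star_colour_spec _ Hf) as [_ [HA' _]]. rewrite E in HA'.
  assert (He : cube_edge i (flip j u) u)
    by (split; [exact HA' | split; [exact HA | exists j; split; [exact Hj | now rewrite flipK]]]).
  rewrite (component_rep_eq i _ _ (rt_step _ _ _ _ He)), nth_flip by lia.
  destruct (nth j u false), (nth j (component_rep i u) false); simpl; lra.
Qed.

Lemma agree_flip_out i u j : length u = N -> (j < N)%nat -> ~ A i u ->
  agree i (flip j u) j = 0.
Proof.
  intros Hu Hj HA. unfold agree.
  destruct (Nat.eqb_spec (star_colour (flip j u)) i) as [E|E]; [|reflexivity].
  assert (Hf : length (flip j u) = N) by now rewrite length_flip.
  destruct (star_colour_spec _ Hf) as [_ [_ HA']]. specialize (HA' j Hj).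
  rewrite flipK, E in HA'. contradiction.
Qed.

(* A neighbour flip j u of colour i lies in the component of u, so it agrees with the common
   representative at j exactly when u does not. *)
Lemma agree_flips_le i u : (i <= k)%nat -> length u = N ->
  sumR (seq 0 N) (fun j => agree i (flip j u) j) <= Dr.
Proof.
  intros Hi Hu. destruct (classic (A i u)) as [HA|HA].
  - apply Rle_trans with (hamming N u (component_rep i u)).
    + apply sumR_le. intros j Hj. apply in_seq in Hj. apply agree_flip_in; auto; lia.
    + apply (diam i); auto. apply component_rep_conn.
  - rewrite (sumR_ext _ _ (fun _ => 0)), sumR_const; [pose proof diam_nonneg; lra|].
    intros j Hj. apply in_seq in Hj. apply agree_flip_out; auto; lia.
Qed.

Lemma agree_double_count :
  sumR (cube N) (fun v => sumR (seq 0 N) (fun j => sumR (seq 0 (k + 1)) (fun i => agree i v j)))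
  = sumR (seq 0 (k + 1))
      (fun i => sumR (cube N) (fun u => sumR (seq 0 N) (fun j => agree i (flip j u) j))).
Proof.
  rewrite sumR_swap.
  rewrite (sumR_ext (seq 0 N) _
    (fun j => sumR (seq 0 (k + 1)) (fun i => sumR (cube N) (fun v => agree i v j))))
    by (intros; apply sumR_swap).
  rewrite sumR_swap. apply sumR_ext. intros i _.
  rewrite (sumR_ext (seq 0 N) _ (fun j => sumR (cube N) (fun u => agree i (flip j u) j))).
  - apply sumR_swap.
  - intros j Hj. apply in_seq in Hj. apply (sumR_cube_flip N j (fun v => agree i v j)). lia.
Qed.

Theorem cube_cover_bound : INR N <= INR (k + 2) * Dr.
Proof.
  set (V := INR (length (cube N))).
  assert (HV : 0 < V).
  { unfold V. rewrite length_cube. apply lt_0_INR. pose proof (Nat.pow_nonzero 2 N). lia. }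
  assert (Hlow : V * (INR N - Dr) <= sumR (cube N)
     (fun v => sumR (seq 0 N) (fun j => sumR (seq 0 (k + 1)) (fun i => agree i v j)))).
  { unfold V. rewrite <- sumR_const. apply sumR_le. intros v Hv.
    apply agree_vertex_ge, length_in_cube, Hv. }
  assert (Hup : sumR (seq 0 (k + 1))
     (fun i => sumR (cube N) (fun u => sumR (seq 0 N) (fun j => agree i (flip j u) j)))
     <= INR (k + 1) * (V * Dr)).
  { apply Rle_trans with (sumR (seq 0 (k + 1)) (fun _ => sumR (cube N) (fun _ => Dr))).
    - apply sumR_le. intros i Hi. apply in_seq in Hi. apply sumR_le. intros u Hu.
      apply agree_flips_le; [lia | now apply length_in_cube].
    - rewrite !sumR_const, length_seq. unfold V. lra. }
  rewrite agree_double_count in Hlow.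
  assert (Hdiv : INR N - Dr <= INR (k + 1) * Dr)
    by (apply Rmult_le_reg_l with V; [exact HV | nra]).
  replace (INR (k + 2)) with (INR (k + 1) + 1) by (rewrite !plus_INR; simpl; lra).
  lra.
Qed.

End CubeCover.

Section CubeEmbedding.
Variables (G H : group) (S : list G) (h : H).
Local Notation lenG := (word_len (@gmul G) gone (genG G S)).
Local Notation lenW := (word_len (wr_mul G H) (wr_one G H) (wr_gen G H S)).

Fixpoint lamps_on (P : list G) (v : list bool) (z : G) : H :=
  match P, v with
  | p :: P', b :: v' => if classic_eq_dec z p then (if b then h else gone) else lamps_on P' v' z
  | _, _ => gone
  end.

Definition cube_config (P : list G) (v : list bool) : wr G H := (lamps_on P v, gone).

Lemma lamps_on_support P v z : lamps_on P v z <> gone -> In z P.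
Proof.
  revert v; induction P as [|p P IH]; destruct v as [|b v]; simpl; try tauto.
  destruct classic_eq_dec as [->|_]; [intros _; now left | intro Hz; right; eapply IH, Hz].
Qed.

Lemma lamps_on_flip P v j z : z <> nth j P gone -> lamps_on P (flip j v) z = lamps_on P v z.
Proof.
  revert v j; induction P as [|p P IH]; destruct v as [|b v], j as [|j]; simpl; intros Hz; auto.
  - destruct classic_eq_dec; [congruence | reflexivity].
  - destruct classic_eq_dec; auto.
Qed.

Lemma lamps_on_nth P v j : NoDup P -> (j < length P)%nat ->
  lamps_on P v (nth j P gone) = if nth j v false then h else gone.
Proof.
  revert v j; induction P as [|p P IH]; intros v j HP Hj; simpl in Hj; [lia|].
  inversion HP as [|? ? Hp HP']; subst.
  destruct v as [|b v], j as [|j]; simpl; try reflexivity.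
  - destruct classic_eq_dec; [reflexivity | congruence].
  - destruct classic_eq_dec as [E|_]; [|apply IH; [exact HP' | lia]].
    elim Hp. rewrite <- E. apply nth_In. lia.
Qed.

Lemma cube_config_fs P v : wr_fs G H (cube_config P v).
Proof. exists P. intros y Hy. eapply lamps_on_support, Hy. Qed.

Lemma cube_config_inv_mul_fst P u z q :
  fst (wr_mul G H (wr_inv G H (cube_config P u)) (cube_config P z)) q
  = gmul (ginv (lamps_on P u q)) (lamps_on P z q).
Proof. rewrite wr_inv_mul_fst. simpl. now rewrite gmul1l. Qed.

Hypothesis gens : generates G S.

Lemma cube_config_flip_dist P v j : (j < length P)%nat ->
  wr_dist G H S (cube_config P v) (cube_config P (flip j v))
  <= 2 * INR (lenG (nth j P gone)) + 1.
Proof.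
  intro Hj. eapply Rle_trans; [apply (wr_dist_le_config G H S gens _ _ (nth j P gone :: nil))|].
  - intros q Hq. rewrite cube_config_inv_mul_fst in Hq. left.
    destruct (classic (nth j P gone = q)) as [E|E]; [exact E|].
    elim Hq. rewrite lamps_on_flip by auto. apply gmulVl.
  - rewrite lamps_cost_cons. change (lamps_cost G S nil) with 0%nat.
    unfold distG, word_dist. simpl snd. rewrite ginv1, gmul1l, (word_len_one G).
    rewrite !plus_INR, mult_INR. simpl. lra.
Qed.

Hypothesis hne : h <> gone.

Lemma hamming_le_cube_config_dist P u z : NoDup P ->
  hamming (length P) u z <= wr_dist G H S (cube_config P u) (cube_config P z).
Proof.
  intro HP. set (e := wr_mul G H (wr_inv G H (cube_config P u)) (cube_config P z)).
  set (J := filter (fun j => negb (Bool.eqb (nth j u false) (nth j z false))) (seq 0 (length P))).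
  assert (HJ : forall j, In j J -> (j < length P)%nat /\ nth j u false <> nth j z false).
  { intros j Hj. apply filter_In in Hj. destruct Hj as [Hj Hne]. apply in_seq in Hj.
    split; [lia|]. intro E. now rewrite E, eqb_reflx in Hne. }
  replace (hamming (length P) u z) with (INR (length (map (fun j => nth j P gone) J))).
  2:{ rewrite length_map. unfold J, hamming. rewrite INR_length_filter.
      apply sumR_ext. intros. now destruct Bool.eqb. }
  unfold wr_dist, word_dist. apply le_INR. apply (word_le_support_card G H S e (lenW e)).
  - apply word_le_wr_fs; [exact gens|]. apply wr_fs_inv_mul; apply cube_config_fs.
  - apply Injective_map_NoDup_in; [|apply NoDup_filter, seq_NoDup].
    intros a b Ha Hb E. apply HJ in Ha. apply HJ in Hb.
    apply (proj1 (NoDup_nth P gone) HP); tauto.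
  - intros q Hq. apply in_map_iff in Hq. destruct Hq as [j [<- Hj]]. apply HJ in Hj.
    destruct Hj as [Hj Hne]. unfold e. rewrite cube_config_inv_mul_fst, !lamps_on_nth by auto.
    intro E. apply gmulV_eq1 in E. destruct (nth j u false), (nth j z false); auto.
Qed.

Lemma growth_le_control (k : nat) (D : R -> Rbar) (rho : R) :
  control_function (wr_fs G H) (wr_dist G H S) k D -> 0 <= rho ->
  Rbar_le (INR (growth G S rho)) (Rbar_mult (INR (k + 2)) (D (2 * rho + 1))).
Proof.
  intros [HD Hcf] Hrho. set (r := 2 * rho + 1).
  destruct (growth_spec G S gens rho) as [P [HP [HlenP HinP]]].
  destruct (Hcf r ltac:(unfold r; lra)) as [Xs [_ [Hball Hdiam]]].
  assert (Hadj : forall v j, (j < length P)%nat ->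
    wr_dist G H S (cube_config P v) (cube_config P (flip j v)) < r).
  { intros v j Hj. eapply Rle_lt_trans; [apply cube_config_flip_dist, Hj|].
    assert (INR (lenG (nth j P gone)) < rho) by (apply HinP, nth_In, Hj). unfold r. lra. }
  assert (HK : 0 < INR (k + 2)) by (apply lt_0_INR; lia).
  pose proof (HD r ltac:(unfold r; lra)) as HDr.
  destruct (D r) as [Dr| |]; simpl in HDr; [|now rewrite Rbar_mult_pinfty | contradiction].
  simpl. rewrite <- HlenP.
  apply (cube_cover_bound (length P) k (fun i v => Xs i (cube_config P v)) Dr).
  - intros v _. destruct (Hball (cube_config P v) (cube_config_fs P v)) as [i [Hi Hb]].
    exists i. split; [exact Hi | split].
    + apply Hb; [apply cube_config_fs | rewrite wr_dist_refl; unfold r; lra].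
    + intros j Hj. apply Hb; [apply cube_config_fs | now apply Hadj].
  - intros i u z Hi _ HA Hc.
    apply Rle_trans with (wr_dist G H S (cube_config P u) (cube_config P z));
      [now apply hamming_le_cube_config_dist|].
    apply (Hdiam i Hi _ _ (cube_config_fs P u) HA).
    refine (clos_rt_map _ _ (cube_config P) _ u z Hc).
    intros a b [Ha [Hb [j [Hj ->]]]].
    split; [apply cube_config_fs | split; [exact Ha | split; [apply cube_config_fs|]]].
    split; [exact Hb | now apply Hadj].
Qed.

End CubeEmbedding.

Lemma weakly_dominates_exp2_transfer (f : R -> R) (D : R -> Rbar) (K : R) :
  1 <= K -> (forall s, 0 <= f s) -> weakly_dominates (fun s => Finite (f s)) exp2 ->
  (forall rho, 0 <= rho -> Rbar_le (f rho) (Rbar_mult K (D (2 * rho + 1)))) ->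
  weakly_dominates D exp2.
Proof.
  intros HK Hf [lam [C [Hlam [HC Hlow]]]] Hbound.
  exists (2 * lam * K), (2 * C + 1). split; [nra | split; [lra|]]. intros t Ht.
  (* One constant scales both the argument and the value of D, hence the time change t -> K t. *)
  set (rho := lam * (K * t) + C).
  assert (Hs : 0 <= K * t) by nra.
  assert (Hexp : Rpower 2 t <= lam * f rho + C).
  { pose proof (Hlow (K * t) Hs) as Hl. simpl in Hl.
    apply Rle_trans with (Rpower 2 (K * t)); [apply Rle_Rpower; [lra | nra] | exact Hl]. }
  replace (2 * lam * K * t + (2 * C + 1)) with (2 * rho + 1) by (unfold rho; ring).
  assert (Hrho : 0 <= rho) by (unfold rho; pose proof (Rmult_le_pos lam (K * t)); lra).
  pose proof (Hbound rho Hrho) as Hb. pose proof (Hf rho) as Hf0.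
  destruct (D (2 * rho + 1)) as [d| |].
  - simpl in Hb |- *. assert (0 <= lam * (K * d - f rho)) by (apply Rmult_le_pos; lra). nra.
  - now rewrite Rbar_mult_pinfty by nra.
  - rewrite Rbar_mult_minfty in Hb by lra. contradiction.
Qed.

Theorem corollary4p6 (G : group) (S : list G) (H : group) (n k : nat) :
  generates G S ->
  exp_growth G S ->
  finite_group H ->
  (exists h : H, h <> gone) ->
  dimAN_le (fun _ : G => True) (distG G S) n ->
  (n <= k)%nat ->
  (exists D : R -> Rbar,
      control_function (wr_fs G H) (wr_dist G H S) k D /\ weakly_dominates exp2 D) /\
  (forall D : R -> Rbar,
      control_function (wr_fs G H) (wr_dist G H S) k D -> weakly_dominates D exp2).
Proof.
  intros gens [Hlow Hup] _ [h hne] [m [Hmn [C [HC Hcf]]]] Hnk. split.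
  - exists (fun r => Finite (lamplighter_bound G S (C + 1) r)). split.
    + apply control_function_mono with m; [lia|].
      apply wreath_control_function; [exact gens | lra | exact Hcf].
    + exact (exp2_dominates_poly_times (fun s => INR (growth G S s)) (C + 1) ltac:(lra) Hup).
  - intros D HD.
    apply (weakly_dominates_exp2_transfer (fun s => INR (growth G S s)) D (INR (k + 2))).
    + rewrite plus_INR. pose proof (pos_INR k). simpl. lra.
    + intro s. apply pos_INR.
    + exact Hlow.
    + intros rho Hrho. now apply (growth_le_control G H S h gens hne k D rho).
Qed.
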